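(* The model-theoretic semantics and the fixed-point semantics of $\mathcal{DL}_S$ are equivalent: for every $\mathcal{DL}_S$ program $P$, the least fixed point of the immediate consequence operator $\mathit{IC}_P$ equals the denotation $D(P)=\bigcap_{I\in\mathbf{M}(P)} I$, where $\mathbf{M}(P)$ is the set of all Herbrand models of $P$.
   Context: Fix a set $\mathit{Lit}$ of literals, a set of variables, and relation symbols, each with a fixed arity. Values: $\mathit{Val} ::= R(v_1,\ldots,v_n) \mid \ell$ with $R$ of arity $n$, $v_i\in\mathit{Val}$, $\ell\in\mathit{Lit}$. Facts are values of the form $R(v_1,\ldots,v_n)$ (possibly nested). Terms: $t ::= R(t_1,\ldots,t_n)\mid x \mid \ell$, $x$ a variable. A $\mathcal{DL}_S$ rule $R$ has a head clause $\mathit{Head}(R)=Q(t_1,\ldots,t_n)$ and a finite set $\mathit{Body}(R)$ of body clauses of the form $\mathit{id}=Q(t_1,\ldots,t_n)$ ($\mathit{id}$ a variable naming the matched fact); every head variable occurs in the body. A program $P$ is a finite set of rules. A substitution $\sigma$ maps variables to values; for a set of facts $I$, $\mathit{Body}(R)\sigma\subseteq I$ means that for each body clause $\mathit{id}=Q(\vec t)$, $Q(\vec t)\sigma\in I$ and $\sigma(\mathit{id})=Q(\vec t)\sigma$. $\mathit{subfact}(R(v_1,\ldots,v_n))=\{R(v_1,\ldots,v_n)\}\cup\bigcup_i\mathit{subfact}(v_i)$, $\mathit{subfact}(\ell)=\emptyset$ for literals; a set of facts $I$ is subfact-closed if $I=\bigcup\{\mathit{subfact}(f)\mid f\in I\}$.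 A database is a set of facts, ordered by inclusion. $\mathit{IC}_R(\mathit{db})=\mathit{db}\cup\bigcup\{\mathit{subfact}(\mathit{Head}(R)\sigma)\mid \mathit{Body}(R)\sigma\subseteq\mathit{db}\}$ and $\mathit{IC}_P(\mathit{db})=\mathit{db}\cup\bigcup_{R\in P}\mathit{IC}_R(\mathit{db})$; $\mathit{IC}_P$ is monotone, so it has a least fixed point. The Herbrand universe of $P$ is the set of all facts constructible from the relation symbols appearing in $P$ (and literals). A Herbrand interpretation is a subfact-closed subset $I$ of the Herbrand universe. $I\models R$ iff for every substitution $\sigma$, $\mathit{Body}(R)\sigma\subseteq I$ implies $\mathit{Head}(R)\sigma\in I$. A Herbrand model of $P$ is a Herbrand interpretation in which every rule of $P$ is true. *)

From Stdlib Require Import List.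
Import ListNotations.

Section DLS.

Variables (Lit Var Sym : Type) (arity : Sym -> nat).

(* Values: R(v1,...,vn) | literal.  Arity is enforced by [wf_val]. *)
Inductive Val : Type :=
| VRel : Sym -> list Val -> Val
| VLit : Lit -> Val.

Inductive wf_val : Val -> Prop :=
| wf_lit : forall l, wf_val (VLit l)
| wf_rel : forall R vs, length vs = arity R -> Forall wf_val vs -> wf_val (VRel R vs).

Definition is_fact (v : Val) : Prop :=
  wf_val v /\ exists R vs, v = VRel R vs.

Inductive Term : Type :=
| TRel : Sym -> list Term -> Term
| TVar : Var -> Term
| TLit : Lit -> Term.

Inductive wf_term : Term -> Prop :=
| wft_var : forall x, wf_term (TVar x)
| wft_lit : forall l, wf_term (TLit l)
| wft_rel : forall R ts, length ts = arity R -> Forall wf_term ts -> wf_term (TRel R ts).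

Inductive var_in_term (x : Var) : Term -> Prop :=
| vit_var : var_in_term x (TVar x)
| vit_rel : forall R ts t, In t ts -> var_in_term x t -> var_in_term x (TRel R ts).

Inductive sym_in_term (S : Sym) : Term -> Prop :=
| sit_here : forall ts, sym_in_term S (TRel S ts)
| sit_arg : forall R ts t, In t ts -> sym_in_term S t -> sym_in_term S (TRel R ts).

Record Atom := mkAtom { atom_rel : Sym; atom_args : list Term }.

Definition atom_term (a : Atom) : Term := TRel (atom_rel a) (atom_args a).

(* A rule: head clause and a finite set of body clauses id = Q(t1..tn). *)
Record Rule := mkRule { head : Atom; body : list (Var * Atom) }.

Definition Program := list Rule.

Definition wf_rule (r : Rule) : Prop :=
  wf_term (atom_term (head r)) /\
  (forall b, In b (body r) -> wf_term (atom_term (snd b))) /\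
  (forall x, var_in_term x (atom_term (head r)) ->
     exists b, In b (body r) /\ (fst b = x \/ var_in_term x (atom_term (snd b)))).

Definition wf_program (P : Program) : Prop := forall r, In r P -> wf_rule r.

Definition Subst := Var -> Val.
Definition wf_subst (s : Subst) : Prop := forall x, wf_val (s x).

Fixpoint subst_term (s : Subst) (t : Term) : Val :=
  match t with
  | TRel R ts => VRel R (map (subst_term s) ts)
  | TVar x => s x
  | TLit l => VLit l
  end.

Definition subst_atom (s : Subst) (a : Atom) : Val := subst_term s (atom_term a).

Definition VSet := Val -> Prop.
Definition subset (A B : VSet) : Prop := forall v, A v -> B v.
Definition set_eq (A B : VSet) : Prop := forall v, A v <-> B v.

Definition is_database (db : VSet) : Prop := forall v, db v -> is_fact v.

Definition body_sat (r : Rule) (s : Subst) (I : VSet) : Prop :=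
  forall b, In b (body r) ->
    I (subst_atom s (snd b)) /\ s (fst b) = subst_atom s (snd b).

Inductive subfact : Val -> Val -> Prop :=
| subfact_self : forall R vs, subfact (VRel R vs) (VRel R vs)
| subfact_arg : forall g R vs v, In v vs -> subfact g v -> subfact g (VRel R vs).

Definition subfact_closed (I : VSet) : Prop :=
  set_eq I (fun g => exists f, I f /\ subfact g f).

Definition IC_R (r : Rule) (db : VSet) : VSet :=
  fun v => db v \/
    exists s, wf_subst s /\ body_sat r s db /\ subfact v (subst_atom s (head r)).

Definition IC_P (P : Program) (db : VSet) : VSet :=
  fun v => db v \/ exists r, In r P /\ IC_R r db v.

Definition sym_in_rule (S : Sym) (r : Rule) : Prop :=
  sym_in_term S (atom_term (head r)) \/
  exists b, In b (body r) /\ sym_in_term S (atom_term (snd b)).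

Definition sym_in_program (S : Sym) (P : Program) : Prop :=
  exists r, In r P /\ sym_in_rule S r.

Inductive sym_in_val (S : Sym) : Val -> Prop :=
| siv_here : forall vs, sym_in_val S (VRel S vs)
| siv_arg : forall R vs v, In v vs -> sym_in_val S v -> sym_in_val S (VRel R vs).

Definition herbrand_universe (P : Program) : VSet :=
  fun v => is_fact v /\ forall S, sym_in_val S v -> sym_in_program S P.

Definition herbrand_interp (P : Program) (I : VSet) : Prop :=
  subset I (herbrand_universe P) /\ subfact_closed I.

Definition rule_true (I : VSet) (r : Rule) : Prop :=
  forall s, wf_subst s -> body_sat r s I -> I (subst_atom s (head r)).

Definition herbrand_model (P : Program) (I : VSet) : Prop :=
  herbrand_interp P I /\ forall r, In r P -> rule_true I r.

Definition denotation (P : Program) : VSet :=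
  fun v => forall I, herbrand_model P I -> I v.

Definition is_least_fixpoint (F : VSet -> VSet) (X : VSet) : Prop :=
  is_database X /\ set_eq (F X) X /\
  forall Y, is_database Y -> set_eq (F Y) Y -> subset X Y.

End DLS.

Arguments VRel {Lit Sym}.
Arguments VLit {Lit Sym}.

(** Let [derivable] be the set of subfacts of head instances of rules whose
    body instances are themselves derivable.  By induction on derivations it
    lies in every prefixed point of [IC_P]; and it is a Herbrand model, the
    derived facts staying in the Herbrand universe because every head variable
    of a well-formed rule is bound by a body clause.  Hence the denotation is a
    database contained in every fixed point.  Conversely, every Herbrand model
    is a prefixed point of the monotone operator [IC_P], hence so is their
    intersection, and [IC_P] is inflationary, so the denotation is a fixed
    point. *)

From Stdlib Require Import List.
Import ListNotations.

#[local] Arguments VRel {Lit Sym}.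
#[local] Arguments TRel {Lit Var Sym}.
#[local] Arguments TVar {Lit Var Sym}.
#[local] Arguments TLit {Lit Var Sym}.
#[local] Arguments wf_val {Lit Sym}.
#[local] Arguments wf_term {Lit Var Sym}.
#[local] Arguments var_in_term {Lit Var Sym}.
#[local] Arguments sym_in_term {Lit Var Sym}.
#[local] Arguments sym_in_val {Lit Sym}.
#[local] Arguments subfact {Lit Sym}.
#[local] Arguments subst_term {Lit Var Sym}.
#[local] Arguments subst_atom {Lit Var Sym}.
#[local] Arguments wf_subst {Lit Var Sym}.
#[local] Arguments wf_rule {Lit Var Sym}.
#[local] Arguments head {Lit Var Sym}.
#[local] Arguments body {Lit Var Sym}.
#[local] Arguments body_sat {Lit Var Sym}.
#[local] Arguments rule_true {Lit Var Sym}.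
#[local] Arguments herbrand_universe {Lit Var Sym}.
#[local] Arguments herbrand_model {Lit Var Sym}.
#[local] Arguments subset {Lit Sym}.

Section Substitution.

Context {Lit Var Sym : Type} (arity : Sym -> nat).

Fixpoint Term_nested_ind (Q : Term Lit Var Sym -> Prop)
  (Hrel : forall R ts, Forall Q ts -> Q (TRel R ts))
  (Hvar : forall x, Q (TVar x)) (Hlit : forall l, Q (TLit l))
  (t : Term Lit Var Sym) : Q t :=
  match t with
  | TRel R ts => Hrel R ts ((fix args ts := match ts return Forall Q ts with
        | [] => Forall_nil _
        | t :: ts => Forall_cons _ (Term_nested_ind Q Hrel Hvar Hlit t) (args ts)
        end) ts)
  | TVar x => Hvar x
  | TLit l => Hlit l
  end.

Lemma wf_val_subst_term (s : Subst Lit Var Sym) (t : Term Lit Var Sym) :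
  wf_subst arity s -> wf_term arity t -> wf_val arity (subst_term s t).
Proof.
  intros Hs. induction t as [R ts IH| x | l] using Term_nested_ind; intros Ht; simpl.
  - inversion Ht as [| | ? ? Hlen Hargs]; subst. constructor.
    + now rewrite length_map.
    + apply Forall_map. rewrite Forall_forall in *. auto.
  - apply Hs.
  - constructor.
Qed.

Lemma sym_in_val_subst_term (s : Subst Lit Var Sym) S (t : Term Lit Var Sym) :
  sym_in_val S (subst_term s t) ->
  sym_in_term S t \/ exists x, var_in_term x t /\ sym_in_val S (s x).
Proof.
  induction t as [R ts IH| x | l] using Term_nested_ind; simpl; intros HS.
  - inversion HS as [| ? ? v Hv HSv]; subst; [left; constructor|].
    apply in_map_iff in Hv as [t [<- Ht]].
    rewrite Forall_forall in IH.
    destruct (IH t Ht HSv) as [HSt | [x [Hx HSx]]].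
    + left. eapply sit_arg; eauto.
    + right. exists x. split; [eapply vit_rel; eauto | exact HSx].
  - right. exists x. split; [constructor | exact HS].
  - inversion HS.
Qed.

Lemma sym_in_val_subst_var (s : Subst Lit Var Sym) S x (t : Term Lit Var Sym) :
  var_in_term x t -> sym_in_val S (s x) -> sym_in_val S (subst_term s t).
Proof.
  induction 1 as [| R ts t Ht _ IH]; simpl; intros HS; [exact HS|].
  eapply siv_arg; [apply in_map; exact Ht | auto].
Qed.

End Substitution.

Section Subfacts.

Context {Lit Var Sym : Type} (arity : Sym -> nat).

Implicit Types (f g : Val Lit Sym) (P : Program Lit Var Sym).

Lemma subfact_trans f g h : subfact f g -> subfact g h -> subfact f h.
Proof. intros Hfg Hgh. induction Hgh; [exact Hfg | eapply subfact_arg; eauto]. Qed.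

Lemma subfact_is_rel g f : subfact g f -> exists R vs, g = VRel R vs.
Proof. induction 1; eauto. Qed.

Lemma wf_val_subfact g f : subfact g f -> wf_val arity f -> wf_val arity g.
Proof.
  induction 1 as [| g R vs v Hv _ IH]; intros Hf; [exact Hf|].
  inversion Hf as [| ? ? _ Hargs]; subst.
  apply IH. exact (proj1 (Forall_forall _ _) Hargs v Hv).
Qed.

Lemma sym_in_val_subfact S g f : subfact g f -> sym_in_val S g -> sym_in_val S f.
Proof. induction 1; [auto | intros; eapply siv_arg; eauto]. Qed.

Lemma herbrand_universe_subfact P g f :
  herbrand_universe arity P f -> subfact g f -> herbrand_universe arity P g.
Proof.
  intros [[Hwf _] Hsyms] Hgf. repeat split.
  - exact (wf_val_subfact _ _ Hgf Hwf).
  - exact (subfact_is_rel _ _ Hgf).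
  - intros S HS. exact (Hsyms S (sym_in_val_subfact _ _ _ Hgf HS)).
Qed.

End Subfacts.

Section Derivations.

Context {Lit Var Sym : Type} (arity : Sym -> nat) (P : Program Lit Var Sym).

Lemma herbrand_universe_rule_head (r : Rule Lit Var Sym) (s : Subst Lit Var Sym) :
  In r P -> wf_rule arity r -> wf_subst arity s ->
  body_sat r s (herbrand_universe arity P) ->
  herbrand_universe arity P (subst_atom s (head r)).
Proof.
  intros Hr [Hwf_head [_ Hhead_vars]] Hs Hbody. repeat split.
  - now apply wf_val_subst_term.
  - eexists _, _. reflexivity.
  - intros S HS.
    destruct (sym_in_val_subst_term _ _ _ HS) as [HS_head | [x [Hx HSx]]].
    + exists r. split; [exact Hr | left; exact HS_head].
    + destruct (Hhead_vars x Hx) as [b [Hb Hbx]].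
      destruct (Hbody b Hb) as [[_ Hsyms] Hid].
      apply Hsyms. destruct Hbx as [<- | Hxb].
      * rewrite <- Hid. exact HSx.
      * exact (sym_in_val_subst_var _ _ _ _ Hxb HSx).
Qed.

Inductive derivable : Val Lit Sym -> Prop :=
| derivable_rule (r : Rule Lit Var Sym) (s : Subst Lit Var Sym) v :
    In r P -> wf_subst arity s ->
    (forall b, In b (body r) -> derivable (subst_atom s (snd b))) ->
    (forall b, In b (body r) -> s (fst b) = subst_atom s (snd b)) ->
    subfact v (subst_atom s (head r)) -> derivable v.

Lemma derivable_subfact g f : derivable f -> subfact g f -> derivable g.
Proof.
  intros [r s f' Hr Hs Hder Hid Hf'] Hgf.
  exact (derivable_rule r s g Hr Hs Hder Hid (subfact_trans _ _ _ Hgf Hf')).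
Qed.

Lemma derivable_rule_true (r : Rule Lit Var Sym) :
  In r P -> rule_true arity derivable r.
Proof.
  intros Hr s Hs Hbody.
  apply (derivable_rule r s); auto.
  - intros b Hb. exact (proj1 (Hbody b Hb)).
  - intros b Hb. exact (proj2 (Hbody b Hb)).
  - constructor.
Qed.

Lemma derivable_least (Y : VSet Lit Sym) :
  subset (IC_P Lit Var Sym arity P Y) Y -> subset derivable Y.
Proof.
  intros HY v Hv. induction Hv as [r s v Hr Hs _ IH Hid Hv].
  apply HY. right. exists r. split; [exact Hr|].
  right. exists s. split; [exact Hs|]. split; [|exact Hv].
  intros b Hb. exact (conj (IH b Hb) (Hid b Hb)).
Qed.

Hypothesis HP : wf_program Lit Var Sym arity P.

Lemma derivable_herbrand_universe v : derivable v -> herbrand_universe arity P v.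
Proof.
  induction 1 as [r s v Hr Hs _ IH Hid Hv].
  apply (herbrand_universe_subfact _ _ _ _ (herbrand_universe_rule_head r s Hr (HP r Hr) Hs
    (fun b Hb => conj (IH b Hb) (Hid b Hb))) Hv).
Qed.

Lemma derivable_herbrand_model : herbrand_model arity P derivable.
Proof.
  split; [split; [exact derivable_herbrand_universe | split] | exact derivable_rule_true].
  - intros Hv. exists v. split; [exact Hv|].
    destruct (derivable_herbrand_universe v Hv) as [[_ [R [vs ->]]] _].
    constructor.
  - intros [f [Hf Hvf]]. exact (derivable_subfact v f Hf Hvf).
Qed.

End Derivations.

Section Models.

Context {Lit Var Sym : Type} (arity : Sym -> nat) (P : Program Lit Var Sym).

Lemma IC_P_monotone (A B : VSet Lit Sym) :
  subset A B -> subset (IC_P Lit Var Sym arity P A) (IC_P Lit Var Sym arity P B).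
Proof.
  intros HAB v [Hv | [r [Hr [Hv | [s [Hs [Hbody Hv]]]]]]].
  1, 2: left; exact (HAB v Hv).
  right. exists r. split; [exact Hr|]. right. exists s.
  split; [exact Hs|]. split; [|exact Hv].
  intros b Hb. destruct (Hbody b Hb) as [HA Hid]. exact (conj (HAB _ HA) Hid).
Qed.

Lemma herbrand_model_prefixpoint (I : VSet Lit Sym) :
  herbrand_model arity P I -> subset (IC_P Lit Var Sym arity P I) I.
Proof.
  intros [[_ Hclosed] Hrules] v [Hv | [r [Hr [Hv | [s [Hs [Hbody Hv]]]]]]]; auto.
  apply Hclosed. exists (subst_atom s (head r)). split; [|exact Hv].
  exact (Hrules r Hr s Hs Hbody).
Qed.

Lemma denotation_prefixpoint :
  subset (IC_P Lit Var Sym arity P (denotation Lit Var Sym arity P))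
    (denotation Lit Var Sym arity P).
Proof.
  intros v Hv I HI. apply (herbrand_model_prefixpoint I HI).
  apply (IC_P_monotone (denotation Lit Var Sym arity P)); [|exact Hv].
  intros w Hw. exact (Hw I HI).
Qed.

End Models.

Theorem mainTheorem5 (Lit Var Sym : Type) (arity : Sym -> nat)
  (P : Program Lit Var Sym) :
  wf_program Lit Var Sym arity P ->
  is_least_fixpoint Lit Sym arity
    (IC_P Lit Var Sym arity P) (denotation Lit Var Sym arity P).
Proof.
  intros HP.
  assert (Hdenot_derivable : subset (denotation Lit Var Sym arity P) (derivable arity P))
    by (intros v Hv; exact (Hv _ (derivable_herbrand_model arity P HP))).
  split; [|split].
  - intros v Hv.
    exact (proj1 (derivable_herbrand_universe arity P HP v (Hdenot_derivable v Hv))).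
  - intros v. split; [apply denotation_prefixpoint | now left].
  - intros Y _ HY v Hv.
    apply (derivable_least arity P Y (fun w Hw => proj1 (HY w) Hw)).
    exact (Hdenot_derivable v Hv).
Qed.
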